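(* Let $P$ be a CMS profile with $n$ voters and $m$ issues in which every voter's dependency graph has maximum in-degree at most $1$, and let $\rho>0$. For each voter $i$ and issue $I_j$, let $C_{ij}$ be the formula (true exactly when voter $i$ is dissatisfied with $I_j$) written in conjunctive normal form with at most $2$ clauses each containing at most $2$ literals, and let $P'$ be the Min 2-SAT instance consisting of the multiset of all clauses of all $C_{ij}$, $i\in[n]$, $j\in[m]$. Let $\mathrm{OPT}(P)$ be the optimal CMS cost of $P$ and $\mathrm{OPT}(P')$ the minimum number of satisfied clauses of $P'$ over all truth assignments. If $\mathrm{OPT}(P)\ge nm/\rho$, then $\mathrm{OPT}(P')\le(1+\rho)\,\mathrm{OPT}(P)$.
   Context: CMS: binary issues $I_1,\dots,I_m$ with domains $\{d_j,\overline{d_j}\}$, voters $1,\dots,n$; voter $i$ has a directed dependency graph $G_i$ on the issues and for each issue $I_j$ a set $B_i^j$ of approved statements $\{t:d\}$ ($d\in\{d_j,\overline{d_j}\}$, $t$ an assignment to the in-neighbours of $I_j$ in $G_i$). Under outcome $s$, voter $i$ is dissatisfied with $I_j$ if $\{t:s_j\}\notin B_i^j$ where $t$ is the projection of $s$ onto the in-neighbours of $I_j$; the cost of $s$ is the total number of (voter, issue) dissatisfactions, and $\mathrm{OPT}(P)$ is its minimum over outcomes. The variable $x_j$ true corresponds to $d_j$, false to $\overline{d_j}$. $C_{ij}$: if $I_j$ has no in-neighbour in $G_i$, it is the disjunction of $\overline{x}_j$ (if $\{d_j\}\notin B_i^j$) and $x_j$ (if $\{\overline{d_j}\}\notin B_i^j$);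 if $I_j$ has in-neighbour $I_k$, it is the disjunction over all $(a,b)$ with $\{a:b\}\notin B_i^j$ of the conjunction of the literals corresponding to $I_k=a$ and $I_j=b$. Min 2-SAT asks for a truth assignment minimizing the number of satisfied clauses. *)

From mathcomp Require Import all_boot all_order all_algebra.
Set Implicit Arguments. Unset Strict Implicit. Unset Printing Implicit Defensive.

(* Issues are 'I_m, voters are 'I_n.  An outcome / truth assignment is a
   function 'I_m -> bool; [true] at j means d_j (x_j true), [false] means
   the complement value (x_j false). *)
Definition assignment (m : nat) := {ffun 'I_m -> bool}.

(* Dependency graph of a voter: G k j means there is an edge I_k -> I_j. *)
Definition dgraph (m : nat) := rel 'I_m.

Definition indeg_le1 (m : nat) (G : dgraph m) : Prop :=
  forall j : 'I_m, #|[set k | G k j]| <= 1.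

(* An assignment t to the in-neighbours of I_j is represented by the
   function that agrees with t on the in-neighbours and is [false] elsewhere.
   A statement {t : d} is a pair (t, d); B is the set of approved ones. *)
Definition proj_in (m : nat) (G : dgraph m) (j : 'I_m) (s : assignment m)
  : assignment m := [ffun k => if G k j then s k else false].

Definition statements (m : nat) := {set (assignment m * bool)}.

Definition dissat (m : nat) (G : dgraph m) (B : statements m) (j : 'I_m)
  (s : assignment m) : bool :=
  (proj_in G j s, s j) \notin B.

Definition cms_cost (n m : nat) (G : 'I_n -> dgraph m)
  (B : 'I_n -> 'I_m -> statements m) (s : assignment m) : nat :=
  \sum_(i < n) \sum_(j < m) dissat (G i) (B i j) j s.

Definition minimum (T : finType) (x0 : T) (f : T -> nat) : nat :=
  f [arg min_(x < x0) f x].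

Definition all_true (m : nat) : assignment m := [ffun _ => true].

Definition OPT_CMS (n m : nat) (G : 'I_n -> dgraph m)
  (B : 'I_n -> 'I_m -> statements m) : nat :=
  minimum (all_true m) (cms_cost G B).

(* Literals, clauses, CNF formulas over variables x_1..x_m:
   (k, true) is x_k, (k, false) is the negation of x_k. *)
Definition literal (m : nat) := ('I_m * bool)%type.
Definition clause (m : nat) := seq (literal m).
Definition cnf (m : nat) := seq (clause m).

Definition lit_sat (m : nat) (x : assignment m) (l : literal m) : bool :=
  x l.1 == l.2.
Definition clause_sat (m : nat) (x : assignment m) (c : clause m) : bool :=
  has (lit_sat x) c.
Definition cnf_sat (m : nat) (x : assignment m) (f : cnf m) : bool :=
  all (clause_sat x) f.

Definition num_sat (m : nat) (P' : seq (clause m)) (x : assignment m) : nat :=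
  count (clause_sat x) P'.

Definition OPT_MIN2SAT (m : nat) (P' : seq (clause m)) : nat :=
  minimum (all_true m) (num_sat P').

Definition reduction (n m : nat) (C : 'I_n -> 'I_m -> cnf m) : seq (clause m) :=
  flatten [seq C i j | i <- enum 'I_n, j <- enum 'I_m].

(** Each [C i j] has at most two clauses, so under any assignment [s] at most
    one of its clauses is satisfied unless all of them are, i.e. unless voter
    [i] is dissatisfied with [I_j] under [s].  Hence the number of clauses of
    [P'] satisfied by [s] is at most [n m + cost(s)].  Taking [s] optimal for
    [P] and using [n m <= rho OPT(P)] gives [OPT(P') <= (1 + rho) OPT(P)].
    The in-degree bound only serves to make such formulas [C i j] exist. *)

From mathcomp Require Import all_boot all_order all_algebra.
Set Implicit Arguments. Unset Strict Implicit. Unset Printing Implicit Defensive.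
Import Order.TTheory GRing.Theory Num.Theory.
Local Open Scope ring_scope.

Lemma minimum_le (T : finType) (x0 : T) (f : T -> nat) (x : T) :
  (minimum x0 f <= f x)%N.
Proof. by rewrite /minimum; case: arg_minnP => // y _; apply. Qed.

Lemma num_sat_reduction (n m : nat) (C : 'I_n -> 'I_m -> cnf m)
    (s : assignment m) :
  num_sat (reduction C) s =
    (\sum_(i < n) \sum_(j < m) count (clause_sat s) (C i j))%N.
Proof.
rewrite /num_sat /reduction count_flatten sumnE big_map big_allpairs_dep.
by rewrite big_enum; apply: eq_bigr => i _; rewrite big_enum.
Qed.

Lemma count_clause_sat_le (m : nat) (s : assignment m) (f : cnf m) :
  (count (clause_sat s) f <= (size f).-1 + cnf_sat s f)%N.
Proof.
case: (boolP (cnf_sat s f)) => [_ | unsat].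
  by rewrite addn1 (leq_trans (count_size _ _)) // leqSpred.
have : (count (clause_sat s) f < size f)%N.
  by rewrite ltn_neqAle count_size andbT -all_count.
by rewrite addn0; case: (size f).
Qed.

Section Reduction.

Variables (n m : nat) (G : 'I_n -> dgraph m) (B : 'I_n -> 'I_m -> statements m).
Variable C : 'I_n -> 'I_m -> cnf m.
Hypothesis size_C : forall i j, (size (C i j) <= 2)%N.
Hypothesis C_dissat : forall i j s, cnf_sat s (C i j) = dissat (G i) (B i j) j s.

Lemma num_sat_reduction_le (s : assignment m) :
  (num_sat (reduction C) s <= n * m + cms_cost G B s)%N.
Proof.
have -> : (n * m = \sum_(i < n) \sum_(j < m) 1)%N.
  by under eq_bigr do rewrite sum_nat_const card_ord muln1;
     rewrite sum_nat_const card_ord.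
rewrite num_sat_reduction /cms_cost -big_split; apply: leq_sum => i _.
rewrite -big_split; apply: leq_sum => j _.
rewrite -C_dissat (leq_trans (count_clause_sat_le s _)) // leq_add2r.
by rewrite -subn1 leq_subLR size_C.
Qed.

Lemma OPT_MIN2SAT_reduction_le :
  (OPT_MIN2SAT (reduction C) <= n * m + OPT_CMS G B)%N.
Proof. exact: leq_trans (minimum_le _ _ _) (num_sat_reduction_le _). Qed.

End Reduction.

Lemma ler_add_mul1D (R : numFieldType) (rho a b : R) :
  0 < rho -> a / rho <= b -> a + b <= (1 + rho) * b.
Proof. by move=> rho_gt0; rewrite ler_pdivrMr // mulrDl mul1r addrC lerD2l mulrC. Qed.

Theorem lemma2 (R : realFieldType) (n m : nat)
  (G : 'I_n -> dgraph m) (B : 'I_n -> 'I_m -> statements m)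
  (C : 'I_n -> 'I_m -> cnf m) (rho : R) :
  (forall i : 'I_n, indeg_le1 (G i)) ->
  0 < rho ->
  (* C i j is a CNF with at most 2 clauses, each with at most 2 literals,
     true exactly when voter i is dissatisfied with I_j *)
  (forall (i : 'I_n) (j : 'I_m),
      (size (C i j) <= 2)%N /\ all (fun c : clause m => (size c <= 2)%N) (C i j) /\
      forall s : assignment m, cnf_sat s (C i j) = dissat (G i) (B i j) j s) ->
  (n * m)%:R / rho <= (OPT_CMS G B)%:R ->
  (OPT_MIN2SAT (reduction C))%:R <= (1 + rho) * (OPT_CMS G B)%:R.
Proof.
move=> _ rho_gt0 HC opt_ge.
have size_C i j : (size (C i j) <= 2)%N by case: (HC i j).
have C_dissat i j s : cnf_sat s (C i j) = dissat (G i) (B i j) j s.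
  by case: (HC i j) => _ [_ ->].
apply: le_trans (ler_add_mul1D rho_gt0 opt_ge).
by rewrite -natrD ler_nat (OPT_MIN2SAT_reduction_le size_C C_dissat).
Qed.
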